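(* Let $\mathbf{g}\in H_{1,2,2}$ with $N(\mathbf{g})$ even. Then there exist $\mathbf{h},\mathbf{h}'\in H_{1,2,2}$ with $\mathbf{g} = (1+\mathbf{i})\mathbf{h}$ and $\mathbf{g} = \mathbf{h}'(1+\mathbf{i})$; i.e. $1+\mathbf{i}$ is both a left factor and a right factor of $\mathbf{g}$ in $H_{1,2,2}$.
   Context: Let $\mathbf{i},\mathbf{j},\mathbf{k}$ be the standard basis units of the real quaternions. For a quaternion $\mathbf{q}=q_1+q_2\mathbf{i}+q_3\mathbf{j}+q_4\mathbf{k}$, its conjugate is $\overline{\mathbf{q}}=q_1-q_2\mathbf{i}-q_3\mathbf{j}-q_4\mathbf{k}$ and its norm is $N(\mathbf{q})=\mathbf{q}\overline{\mathbf{q}}$. $H_{1,2,2}$ is the $\mathbb{Z}$-module generated by $\mathbf{v}_1=1$, $\mathbf{v}_2=\mathbf{i}$, $\mathbf{v}_3=\tfrac12(1+\mathbf{i}+\sqrt2\,\mathbf{j})$, $\mathbf{v}_4=\tfrac12(1+\mathbf{i}+\sqrt2\,\mathbf{k})$; it is a subring of the quaternions, closed under conjugation, with the norm taking nonnegative integer values on it. *)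

From Stdlib Require Import Reals ZArith.
Open Scope R_scope.

Record quat := Quat { qr : R; qi_ : R; qj_ : R; qk_ : R }.

Definition qadd (p q : quat) : quat :=
  Quat (qr p + qr q) (qi_ p + qi_ q) (qj_ p + qj_ q) (qk_ p + qk_ q).

Definition qscale (r : R) (q : quat) : quat :=
  Quat (r * qr q) (r * qi_ q) (r * qj_ q) (r * qk_ q).

(* Hamilton product: i^2 = j^2 = k^2 = ijk = -1. *)
Definition qmul (p q : quat) : quat :=
  Quat (qr p * qr q - qi_ p * qi_ q - qj_ p * qj_ q - qk_ p * qk_ q)
       (qr p * qi_ q + qi_ p * qr q + qj_ p * qk_ q - qk_ p * qj_ q)
       (qr p * qj_ q - qi_ p * qk_ q + qj_ p * qr q + qk_ p * qi_ q)
       (qr p * qk_ q + qi_ p * qj_ q - qj_ p * qi_ q + qk_ p * qr q).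

Definition qconj (q : quat) : quat := Quat (qr q) (- qi_ q) (- qj_ q) (- qk_ q).

Definition qnorm (q : quat) : quat := qmul q (qconj q).

Definition qreal (r : R) : quat := Quat r 0 0 0.

Definition q1 : quat := qreal 1.
Definition qI : quat := Quat 0 1 0 0.
Definition qJ : quat := Quat 0 0 1 0.
Definition qK : quat := Quat 0 0 0 1.

Definition v1 : quat := q1.
Definition v2 : quat := qI.
Definition v3 : quat := Quat (1/2) (1/2) (sqrt 2 / 2) 0.
Definition v4 : quat := Quat (1/2) (1/2) 0 (sqrt 2 / 2).

Definition in_H122 (q : quat) : Prop :=
  exists a b c d : Z,
    q = qadd (qadd (qscale (IZR a) v1) (qscale (IZR b) v2))
             (qadd (qscale (IZR c) v3) (qscale (IZR d) v4)).

Definition one_plus_i : quat := qadd q1 qI.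

(* Write g = a + b i + c v3 + d v4; then 4 N(g) = (2a+c+d)^2 + (2b+c+d)^2 + 2c^2 + 2d^2.
   Left and right multiplication by 1 + i act on the integer coordinates by
   (a,b,c,d) |-> (a-b-c, a+b+d, c-d, c+d) and (a-b-d, a+b+c, c+d, d-c), so g is a left
   (resp. right) multiple of 1 + i exactly when c + d and a + b + c are even.  Both
   parities follow from 4 N(g) = 0 mod 8: if c + d were odd the four terms would be
   1 + 1 + 2 = 4 mod 8, and once c + d = 2k the sum is 4(a + b + c) mod 8. *)
From Stdlib Require Import Reals ZArith Lia Lra.
Open Scope R_scope.

Lemma quat_ext (p q : quat) :
  qr p = qr q -> qi_ p = qi_ q -> qj_ p = qj_ q -> qk_ p = qk_ q -> p = q.
Proof. destruct p, q; simpl; intros; subst; reflexivity. Qed.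

Lemma qnorm_Quat (x y z w : R) :
  qnorm (Quat x y z w) = qreal (x * x + y * y + z * z + w * w).
Proof. unfold qnorm, qmul, qconj, qreal; apply quat_ext; cbn [qr qi_ qj_ qk_]; ring. Qed.

Definition h122 (a b c d : Z) : quat :=
  qadd (qadd (qscale (IZR a) v1) (qscale (IZR b) v2))
       (qadd (qscale (IZR c) v3) (qscale (IZR d) v4)).

Lemma in_H122_h122 (a b c d : Z) : in_H122 (h122 a b c d).
Proof. exists a, b, c, d; reflexivity. Qed.

Lemma h122_coords (a b c d : Z) :
  h122 a b c d =
  Quat (IZR (2 * a + c + d) / 2) (IZR (2 * b + c + d) / 2)
       (IZR c * sqrt 2 / 2) (IZR d * sqrt 2 / 2).
Proof.
  unfold h122, qadd, qscale, v1, v2, v3, v4, q1, qreal, qI.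
  apply quat_ext; cbn [qr qi_ qj_ qk_]; rewrite ?plus_IZR, ?mult_IZR; field.
Qed.

Definition h122_norm4 (a b c d : Z) : Z :=
  ((2 * a + c + d) * (2 * a + c + d) + (2 * b + c + d) * (2 * b + c + d)
   + 2 * c * c + 2 * d * d)%Z.

Lemma qnorm_h122 (a b c d : Z) :
  qnorm (h122 a b c d) = qreal (IZR (h122_norm4 a b c d) / 4).
Proof.
  rewrite h122_coords, qnorm_Quat; f_equal; unfold h122_norm4.
  assert (sqrt2_sqr : sqrt 2 * sqrt 2 = 2) by (apply sqrt_sqrt; lra).
  repeat rewrite ?plus_IZR, ?mult_IZR.
  replace (IZR c * sqrt 2 / 2 * (IZR c * sqrt 2 / 2))
    with (IZR c * IZR c * (sqrt 2 * sqrt 2) / 4) by field.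
  replace (IZR d * sqrt 2 / 2 * (IZR d * sqrt 2 / 2))
    with (IZR d * IZR d * (sqrt 2 * sqrt 2) / 4) by field.
  rewrite sqrt2_sqr; field.
Qed.

Lemma qmul_one_plus_i_h122 (a b c d : Z) :
  qmul one_plus_i (h122 a b c d) = h122 (a - b - c) (a + b + d) (c - d) (c + d).
Proof.
  rewrite !h122_coords; unfold one_plus_i, qmul, qadd, q1, qreal, qI.
  apply quat_ext; cbn [qr qi_ qj_ qk_];
    repeat rewrite ?minus_IZR, ?plus_IZR, ?mult_IZR; field.
Qed.

Lemma qmul_h122_one_plus_i (a b c d : Z) :
  qmul (h122 a b c d) one_plus_i = h122 (a - b - d) (a + b + c) (c + d) (d - c).
Proof.
  rewrite !h122_coords; unfold one_plus_i, qmul, qadd, q1, qreal, qI.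
  apply quat_ext; cbn [qr qi_ qj_ qk_];
    repeat rewrite ?minus_IZR, ?plus_IZR, ?mult_IZR; field.
Qed.

Lemma Z_sqr_parity (x : Z) : exists t, (x * x = x + 2 * t)%Z.
Proof.
  destruct (Z.Even_or_Odd x) as [[y ->] | [y ->]];
    [exists (2 * y * y - y)%Z | exists (2 * y * y + y)%Z]; ring.
Qed.

Lemma Z_odd_sqr_mod8 (p : Z) : exists t, ((2 * p + 1) * (2 * p + 1) = 8 * t + 1)%Z.
Proof. destruct (Z_sqr_parity p) as [t Ht]; exists (p + t)%Z; lia. Qed.

Section NormMultipleOf8.

Variables a b c d n : Z.
Hypothesis norm4_eq : h122_norm4 a b c d = (8 * n)%Z.

Lemma norm4_mod8_even_cd : exists k, (c + d = 2 * k)%Z.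
Proof.
  unfold h122_norm4 in norm4_eq.
  destruct (Z.Even_or_Odd c) as [[c' ->] | [c' ->]];
  destruct (Z.Even_or_Odd d) as [[d' ->] | [d' ->]];
    try solve [exists (c' + d')%Z; ring | exists (c' + d' + 1)%Z; ring];
    exfalso;
    destruct (Z_odd_sqr_mod8 (a + c' + d')) as [s Hs];
    destruct (Z_odd_sqr_mod8 (b + c' + d')) as [t Ht];
    lia.
Qed.

Lemma norm4_mod8_even_abc : exists l, (a + b + c = 2 * l)%Z.
Proof.
  destruct norm4_mod8_even_cd as [k Hk].
  assert (Hd : d = (2 * k - c)%Z) by lia; subst d.
  unfold h122_norm4 in norm4_eq.
  destruct (Z_sqr_parity (a + k)) as [s Hs].
  destruct (Z_sqr_parity (b + k)) as [t Ht].
  destruct (Z_sqr_parity c) as [u Hu].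
  destruct (Z.Even_or_Odd (a + b + c)) as [[l Hl] | [l Hl]]; [exists l; exact Hl | lia].
Qed.

End NormMultipleOf8.

Theorem theorem3 (g : quat) :
  in_H122 g ->
  (exists n : Z, qnorm g = qreal (2 * IZR n)) ->
  exists h h' : quat,
    in_H122 h /\ in_H122 h' /\
    g = qmul one_plus_i h /\ g = qmul h' one_plus_i.
Proof.
  intros [a [b [c [d Hg]]]] [n Hn].
  change (g = h122 a b c d) in Hg; subst g.
  assert (norm4_eq : h122_norm4 a b c d = (8 * n)%Z).
  { rewrite qnorm_h122 in Hn; apply (f_equal qr) in Hn; simpl in Hn.
    apply eq_IZR; rewrite mult_IZR; lra. }
  destruct (norm4_mod8_even_cd _ _ _ _ _ norm4_eq) as [k Hk].
  destruct (norm4_mod8_even_abc _ _ _ _ _ norm4_eq) as [l Hl].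
  exists (h122 l (l - a - k) k (d - k)), (h122 (l + k - c) (l - a - c) (k - d) k).
  split; [apply in_H122_h122 |].
  split; [apply in_H122_h122 |].
  rewrite qmul_one_plus_i_h122, qmul_h122_one_plus_i.
  split; f_equal; lia.
Qed.
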